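(* Suppose that there exist a cyclic HDM$(k,n;h)$, a cyclic DM$(n',k;1)$, and a cyclic DCA$(k,hn'+1;hn')$ satisfying P1 and P2. Then there exists a cyclic DCA$(k,nn'+1;nn')$ satisfying P1 and P2.
   Context: A difference matrix DM$(n,k;\lambda)$ over an abelian group $(G,+)$ of order $n$ is an $n\times k$ matrix $Q=[q(i,j)]$ with entries in $G$ such that for every pair of distinct columns $j,j'$ the multiset $\{q(i,j)-q(i,j') : 0\le i\le n-1\}$ contains every element of $G$ exactly $\lambda$ times. A holey difference matrix HDM$(k,n;h)$ over $G$ with hole a subgroup $H$ of order $h$ is an $(n-h)\times k$ matrix with entries in $G$ such that for every pair of distinct columns the multiset of row differences contains every element of $G\setminus H$ exactly once. A difference covering array DCA$(k,\eta;n)$ over $G$ is an $\eta\times k$ matrix with entries in $G$ such that for every pair of distinct columns $j,j'$ the multiset of row differences $q(i,j)-q(i,j')$ contains every element of $G$ at least once. Any of these is cyclic if $G=\mathbb{Z}_n$. A DCA$(k,n+1;n)$ is taken in normalized form: all entries of its last row (row $n$) and last column (column $k-1$) equal $0$. It satisfies P1 if $0$ occurs at least twice in every column, and P2 if for all distinct columns $j,j'$ with $j\neq k-1\neq j'$, the set $\{q(i,j)-q(i,j') : 0\le i\le n-1\}$ equals $G\setminus\{0\}$. *)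

(* The cyclic group Z_m (m >= 1) is modelled by the
   residues {0,...,m-1} in nat with subtraction modulo m.  A matrix with
   r rows and c columns is a function Q : nat -> nat -> nat, of which only
   the entries Q i j with i < r, j < c matter. *)
From mathcomp Require Import all_boot.
Set Implicit Arguments. Unset Strict Implicit. Unset Printing Implicit Defensive.

(* a - b in Z_m, for residues a b < m *)
Definition zsub (m a b : nat) : nat := (a + (m - b)) %% m.

Definition entries_in (m r c : nat) (Q : nat -> nat -> nat) : Prop :=
  forall i j, i < r -> j < c -> Q i j < m.

Definition diff_count (m r : nat) (Q : nat -> nat -> nat) (j j' g : nat) : nat :=
  count (fun i => zsub m (Q i j) (Q i j') == g) (iota 0 r).

Definition is_cyclic_DM (m k lam : nat) (Q : nat -> nat -> nat) : Prop :=
  entries_in m m k Q /\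
  forall j j', j < k -> j' < k -> j != j' ->
    forall g, g < m -> diff_count m m Q j j' g = lam.

(* the subgroup of Z_m of order h (h %| m): the multiples of m %/ h *)
Definition in_hole (m h g : nat) : bool := (m %/ h) %| g.

Definition is_cyclic_HDM (k m h : nat) (Q : nat -> nat -> nat) : Prop :=
  0 < h /\ h %| m /\
  entries_in m (m - h) k Q /\
  forall j j', j < k -> j' < k -> j != j' ->
    forall g, g < m -> diff_count m (m - h) Q j j' g = (if in_hole m h g then 0 else 1).

Definition is_cyclic_DCA (k eta m : nat) (Q : nat -> nat -> nat) : Prop :=
  entries_in m eta k Q /\
  forall j j', j < k -> j' < k -> j != j' ->
    forall g, g < m -> 0 < diff_count m eta Q j j' g.

Definition normalized (k m : nat) (Q : nat -> nat -> nat) : Prop :=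
  (forall j, j < k -> Q m j = 0) /\
  (forall i j, i <= m -> j.+1 = k -> Q i j = 0).

Definition P1 (k m : nat) (Q : nat -> nat -> nat) : Prop :=
  forall j, j < k -> 2 <= count (fun i => Q i j == 0) (iota 0 m.+1).

Definition P2 (k m : nat) (Q : nat -> nat -> nat) : Prop :=
  forall j j', j.+1 < k -> j'.+1 < k -> j != j' ->
    forall g, g < m -> (0 < diff_count m m Q j j' g <-> g != 0).

Definition good_DCA (k m : nat) (Q : nat -> nat -> nat) : Prop :=
  is_cyclic_DCA k m.+1 m Q /\ normalized k m Q /\ P1 k m Q /\ P2 k m Q.

(* Index the rows of the HDM A by r < n - h and those of the DM D by s < n';
   the rows A r + n D s form a "lifted" array over Z_(n n') whose differences
   cover, exactly once, every g that is not a multiple of q = n/h (the lift of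
   the hole of A).  The multiples of q form a copy q Z_(n n') of Z_(h n'), and
   the rows of the DCA C scaled by q cover exactly this subgroup, with the same
   properties P1 and P2.  Stacking both arrays and subtracting the last column
   gives the normalized DCA. *)
From mathcomp Require Import all_boot zify.

Set Implicit Arguments.
Unset Strict Implicit.
Unset Printing Implicit Defensive.

Lemma zsubE m a b : b <= m -> b + zsub m a b = a %[mod m].
Proof.
move=> bm; rewrite /zsub modnDmr addnA (addnC b) -addnA subnKC //.
by rewrite modnDr.
Qed.

Lemma zsub_lt m a b : 0 < m -> zsub m a b < m.
Proof. by move=> m0; rewrite /zsub ltn_pmod. Qed.

Lemma zsub_eq m a b c : 0 < m -> b <= m ->
  (zsub m a b == c) = (c < m) && (b + c == a %[mod m]).
Proof.
move=> m0 bm; apply/idP/idP.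
  by move/eqP<-; rewrite zsub_lt //= zsubE.
case/andP=> cm /eqP eq_bc; apply/eqP.
have : b + zsub m a b = b + c %[mod m] by rewrite zsubE // eq_bc.
by move/eqP; rewrite eqn_modDl !modn_small ?zsub_lt // => /eqP.
Qed.

Lemma zsub_sub2r m x y z : 0 < m -> x < m -> y < m -> z < m ->
  zsub m (zsub m x z) (zsub m y z) = zsub m x y.
Proof.
move=> m0 xm ym zm; apply/eqP.
rewrite zsub_eq ?zsub_lt ?(ltnW (zsub_lt _ _ m0)) //=.
rewrite -(eqn_modDl z) addnA -modnDml zsubE ?(ltnW zm) // modnDml.
by rewrite -modnDml zsubE ?(ltnW zm) // modnDml zsubE ?(ltnW ym).
Qed.

Lemma zsubnn m x : x <= m -> zsub m x x = 0.
Proof. by move=> xm; rewrite /zsub subnKC // modnn. Qed.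

Lemma zsubr0 m x : zsub m x 0 = x %% m.
Proof. by rewrite /zsub subn0 modnDr. Qed.

Lemma zsub_mulr M q x y g : 0 < M -> 0 < q -> y < M -> g < M * q ->
  (zsub (M * q) (x * q) (y * q) == g) = (q %| g) && (zsub M x y == g %/ q).
Proof.
move=> M0 q0 yM gMq.
have Mq0 : 0 < M * q by rewrite muln_gt0 M0.
rewrite zsub_eq ?leq_mul2r ?(ltnW yM) ?orbT // gMq /=.
have [qg | /negP nqg] := boolP (q %| g).
  rewrite -{1}(divnK qg) -mulnDl -!muln_modl eqn_pmul2r //.
  by rewrite zsub_eq ?(ltnW yM) //= ltn_divLR // gMq.
apply/negbTE/negP => /= /eqP eq_yg; apply: nqg; rewrite /dvdn.
have : (y * q + g) %% q = (x * q) %% q.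
  by rewrite -(modn_dvdm _ (dvdn_mull M (dvdnn q))) eq_yg modn_dvdm ?dvdn_mull.
by rewrite modnMDl modnMl => ->.
Qed.

Lemma count_iota_mul (p : pred nat) a c :
  count p (iota 0 (a * c)) =
  sumn [seq count (fun s => p (r * c + s)) (iota 0 c) | r <- iota 0 a].
Proof.
elim: a => [|a IH] //.
rewrite mulSnr iotaD count_cat IH -[a.+1]addn1 iotaD map_cat sumn_cat /=.
by rewrite add0n addn0 -{1}[a * c]addn0 iotaDl count_map.
Qed.

Lemma count_iota_add (p : pred nat) a b :
  count p (iota 0 (a + b)) =
  count p (iota 0 a) + count (fun i => p (a + i)) (iota 0 b).
Proof.
rewrite iotaD count_cat add0n.
have -> : iota a b = map (addn a) (iota 0 b) by rewrite -iotaDl addn0.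
by rewrite count_map.
Qed.

(* When a - a' = g mod n, the unique row s is the one where D s j - D s j' is
   the carry of a' + (g mod n) past n plus g / n, taken mod n'. *)
Lemma count_zsub_DM_lift n n' k (D : nat -> nat -> nat) j j' a a' g :
  0 < n -> 0 < n' -> is_cyclic_DM n' k 1 D -> j < k -> j' < k -> j != j' ->
  a < n -> a' < n -> g < n * n' ->
  count (fun s => zsub (n * n') (a + n * D s j) (a' + n * D s j') == g)
        (iota 0 n')
  = (zsub n a a' == g %% n).
Proof.
move=> n0 n'0 [DE DD] jk j'k jj' an a'n gN.
have N0 : 0 < n * n' by rewrite muln_gt0 n0.
have lift_le s : s < n' -> a' + n * D s j' <= n * n'.
  by move=> sn; have := DE s j' sn j'k; nia.
have [eq_a | neq_a] := boolP (zsub n a a' == g %% n).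
  have : a' + g %% n = a %[mod n].
    by move: eq_a; rewrite zsub_eq ?(ltnW a'n) // => /andP[_ /eqP].
  set e := (a' + g %% n) %/ n => mod_a.
  have def_e : a' + g %% n = e * n + a.
    by rewrite {1}(divn_eq (a' + g %% n) n) mod_a (modn_small an).
  have def_g := divn_eq g n.
  set t := (e + g %/ n) %% n'.
  have tn : t < n' by rewrite ltn_pmod.
  rewrite [RHS]/= -(DD j j' jk j'k jj' t tn) /diff_count.
  apply: eq_in_count => s; rewrite mem_iota add0n => /andP[_ sn].
  rewrite zsub_eq ?lift_le // gN zsub_eq ?(ltnW (DE s j' sn j'k)) // tn /=.
  have -> : a' + n * D s j' + g = a + n * (D s j' + (e + g %/ n)) by nia.
  by rewrite eqn_modDl -!muln_modr eqn_pmul2l // modnDmr.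
apply/eqP; rewrite eqn0Ngt -has_count; apply/hasPn => s.
rewrite mem_iota add0n => /andP[_ sn].
rewrite zsub_eq ?lift_le // gN /=; apply: contra neq_a => /eqP eq_lift.
rewrite zsub_eq ?(ltnW a'n) ?ltn_pmod //=.
have : a' + n * D s j' + g = a + n * D s j %[mod n].
  by rewrite -(modn_dvdm _ (dvdn_mulr n' (dvdnn n))) eq_lift modn_dvdm ?dvdn_mulr.
by rewrite addnAC ![_ + n * _]addnC !(mulnC n) !modnMDl modnDmr => ->.
Qed.

Section ProductConstruction.

Variables (k n h n' : nat) (A D C : nat -> nat -> nat).
Hypotheses (n_gt0 : 0 < n) (n'_gt0 : 0 < n').
Hypothesis HDM_A : is_cyclic_HDM k n h A.
Hypothesis DM_D : is_cyclic_DM n' k 1 D.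
Hypothesis good_C : good_DCA k (h * n') C.

Let q := n %/ h.
Let M := h * n'.
Let P := (n - h) * n'.
Let N := n * n'.

Let h_gt0 : 0 < h. Proof. by case: HDM_A. Qed.
Let def_n : n = q * h. Proof. by case: HDM_A => _ [hn _]; rewrite /q divnK. Qed.
Let q_gt0 : 0 < q.
Proof. by case: HDM_A => _ [hn _]; rewrite /q divn_gt0 // dvdn_leq. Qed.
Let M_gt0 : 0 < M. Proof. by rewrite muln_gt0 h_gt0. Qed.
Let N_gt0 : 0 < N. Proof. by rewrite muln_gt0 n_gt0. Qed.
Let def_N : N = M * q. Proof. by rewrite /N def_n /M [RHS]mulnC mulnA. Qed.
Let PM : P + M = N.
Proof. by rewrite /P /M -mulnDl subnK // dvdn_leq //; case: HDM_A => _ []. Qed.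
Let PMS : P + M.+1 = N.+1. Proof. by rewrite addnS PM. Qed.
Let C_lt i j : i <= M -> j < k -> C i j < M.
Proof. by case: good_C => [[CE _] _] *; apply: CE. Qed.

Definition lifted_row i j := A (i %/ n') j + n * D (i %% n') j.

Definition stacked_row i j :=
  if i < P then lifted_row i j else C (i - P) j * q.

Definition product_DCA i j := zsub N (stacked_row i j) (stacked_row i k.-1).

Let stacked_row_lt i j : i <= N -> j < k -> stacked_row i j < N.
Proof.
move=> iN jk; rewrite /stacked_row; case: ifP => iP.
  have rn : i %/ n' < n - h by rewrite ltn_divLR.
  case: HDM_A => _ [_ [AE _]]; have := AE _ _ rn jk.
  have := DM_D.1 (i %% n') j (ltn_pmod _ n'_gt0) jk; rewrite /lifted_row /N.
  nia.
by rewrite def_N ltn_mul2r q_gt0 C_lt // leq_subLR PM.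
Qed.

Let stacked_row_N j : j < k -> stacked_row N j = 0.
Proof.
case: good_C => _ [[C0 _] _] jk.
by rewrite /stacked_row -PM ltnNge leq_addr /= addKn C0.
Qed.

Let zsub_product_DCA i j j' : i <= N -> j < k -> j' < k ->
  zsub N (product_DCA i j) (product_DCA i j') =
  zsub N (stacked_row i j) (stacked_row i j').
Proof.
move=> iN jk j'k; rewrite zsub_sub2r ?stacked_row_lt //.
by rewrite prednK // (leq_ltn_trans _ jk).
Qed.

Let count_lifted_rows j j' g : j < k -> j' < k -> j != j' -> g < N ->
  count (fun i => zsub N (stacked_row i j) (stacked_row i j') == g) (iota 0 P)
  = ~~ (q %| g).
Proof.
case: HDM_A => _ [hn [AE AD]] jk j'k jj' gN.
rewrite -(eq_in_count (a1 := fun i =>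
           zsub N (lifted_row i j) (lifted_row i j') == g)); last first.
  by move=> i; rewrite mem_iota /stacked_row => /andP[_ ->].
rewrite count_iota_mul.
have block_count r : r < n - h ->
    count (fun s => zsub N (lifted_row (r * n' + s) j)
                           (lifted_row (r * n' + s) j') == g) (iota 0 n')
    = (zsub n (A r j) (A r j') == g %% n).
  move=> rn; rewrite -(count_zsub_DM_lift n_gt0 n'_gt0 DM_D jk j'k jj') ?AE //.
  apply: eq_in_count => s; rewrite mem_iota add0n => /andP[_ sn].
  by rewrite /lifted_row divnMDl // divn_small // addn0 modnMDl modn_small.
rewrite (eq_in_map _ (fun r => nat_of_bool (zsub n (A r j) (A r j') == g %% n)) _).1;
  last by move=> r; rewrite mem_iota add0n => /andP[_ /block_count].
rewrite (sumn_count (fun r => zsub n (A r j) (A r j') == g %% n)).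
rewrite /diff_count in AD; rewrite AD ?ltn_pmod // /in_hole -/q.
have q_dvd_n : q %| n by rewrite def_n dvdn_mulr.
by rewrite /dvdn (modn_dvdm _ q_dvd_n); case: (_ == _).
Qed.

Let count_scaled_rows j j' g m : m <= M.+1 -> j < k -> j' < k -> g < N ->
  count (fun i => zsub N (stacked_row (P + i) j) (stacked_row (P + i) j') == g)
        (iota 0 m)
  = if q %| g then diff_count M m C j j' (g %/ q) else 0.
Proof.
move=> mM jk j'k gN.
rewrite (eq_in_count (a2 := fun i =>
           (q %| g) && (zsub M (C i j) (C i j') == g %/ q))).
  by case: (q %| g) => //=; rewrite count_pred0.
move=> i; rewrite mem_iota add0n => /andP[_ im].
rewrite /stacked_row ltnNge leq_addr /= addKn /N -/N def_N.
by rewrite zsub_mulr ?C_lt // -?def_N // -ltnS (leq_trans im).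
Qed.

Let diff_count_product_DCA j j' g m : m <= M.+1 -> j < k -> j' < k ->
  j != j' -> g < N ->
  diff_count N (P + m) product_DCA j j' g =
  ~~ (q %| g) + (if q %| g then diff_count M m C j j' (g %/ q) else 0).
Proof.
move=> mM jk j'k jj' gN; rewrite /diff_count.
rewrite (eq_in_count (a2 := fun i =>
           zsub N (stacked_row i j) (stacked_row i j') == g)) => [|i].
  by rewrite count_iota_add count_lifted_rows // count_scaled_rows.
rewrite mem_iota add0n => /andP[_ im].
by rewrite zsub_product_DCA // -PM; lia.
Qed.

Lemma product_DCA_is_cyclic_DCA : is_cyclic_DCA k N.+1 N product_DCA.
Proof.
split=> [i j _ _ | j j' jk j'k jj' g gN]; first exact: zsub_lt.
rewrite -PMS diff_count_product_DCA //.
have [qg | //] := boolP (q %| g).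
case: good_C => [[_ CD] _]; apply: CD => //.
by rewrite ltn_divLR // -def_N.
Qed.

Lemma product_DCA_normalized : normalized k N product_DCA.
Proof.
split=> [j jk | i j iN jk].
  have k1 : k.-1 < k by rewrite prednK // (leq_ltn_trans _ jk).
  by rewrite /product_DCA !stacked_row_N // zsubnn.
by rewrite /product_DCA -jk /= zsubnn // ltnW // stacked_row_lt // -jk.
Qed.

Lemma product_DCA_P1 : P1 k N product_DCA.
Proof.
case: good_C => _ [[_ C0] [CP1 _]] j jk.
rewrite -PMS count_iota_add.
apply: leq_trans (leq_addl _ _).
rewrite (eq_in_count (a2 := fun i => C i j == 0)) ?CP1 // => i.
rewrite mem_iota add0n ltnS => /andP[_ iM].
have k1 : k.-1.+1 = k by rewrite prednK // (leq_ltn_trans _ jk).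
rewrite /product_DCA /stacked_row ltnNge leq_addr /= addKn (C0 i k.-1) // mul0n.
rewrite zsubr0 modn_small; last by rewrite def_N ltn_mul2r q_gt0 C_lt.
by rewrite muln_eq0 (gtn_eqF q_gt0) orbF.
Qed.

Lemma product_DCA_P2 : P2 k N product_DCA.
Proof.
case: good_C => _ [_ [_ CP2]] j j' jk j'k jj' g gN.
rewrite -{2}PM diff_count_product_DCA ?(ltnW jk) ?(ltnW j'k) //.
have [qg | nqg] := boolP (q %| g); last first.
  by split=> // _; apply: contraNneq nqg => ->.
rewrite add0n CP2 ?ltn_divLR // -?def_N //.
by rewrite -{2}(divnK qg) muln_eq0 (gtn_eqF q_gt0) orbF.
Qed.

Lemma product_DCA_good : good_DCA k N product_DCA.
Proof.
split; first exact: product_DCA_is_cyclic_DCA.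
split; first exact: product_DCA_normalized.
by split; [exact: product_DCA_P1 | exact: product_DCA_P2].
Qed.

End ProductConstruction.

Theorem mainTheorem7 (k n h n' : nat) :
  0 < n -> 0 < n' ->
  (exists Q, is_cyclic_HDM k n h Q) ->
  (exists Q, is_cyclic_DM n' k 1 Q) ->
  (exists Q, good_DCA k (h * n') Q) ->
  exists Q, good_DCA k (n * n') Q.
Proof.
move=> n_gt0 n'_gt0 [A HDM_A] [D DM_D] [C good_C].
by eexists; apply: (product_DCA_good n_gt0 n'_gt0 HDM_A DM_D good_C).
Qed.
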